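(* Let $E$ be a real Banach space which is uniformly convex with modulus of convexity $\delta_E$. Then for all $\varepsilon,\eta$ with $0<\varepsilon/2<\eta<\varepsilon<2$, $$\frac{\delta_E(\eta)}{\eta}\le \frac{\delta_E(\varepsilon)}{\varepsilon}-2\,\frac{\varepsilon-\eta}{\varepsilon\,\eta}\,\delta_E(r(\varepsilon)),\qquad\text{where } r(\varepsilon)=\frac14\left(\frac{\varepsilon}{2}-\delta_E(\varepsilon)\right).$$
   Context: $B_r(a)=\{x\in E:\|x-a\|\le r\}$. For a closed convex set $A\subset E$ its modulus of convexity is $\delta_A(\varepsilon)=\sup\{\delta\ge 0:\ B_\delta(\frac{x_1+x_2}{2})\subset A \text{ for all } x_1,x_2\in A \text{ with } \|x_1-x_2\|=\varepsilon\}$, $\varepsilon\in[0,\operatorname{diam}A)$. The modulus of convexity of the space is $\delta_E=\delta_{B_1(0)}$, defined on $[0,2)$, and $E$ is uniformly convex if $\delta_E(\varepsilon)>0$ for all $\varepsilon\in(0,2)$. *)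

From HB Require Import structures.
From mathcomp Require Import all_boot all_order all_algebra.
From mathcomp Require Import all_classical all_reals all_analysis.
Set Implicit Arguments. Unset Strict Implicit. Unset Printing Implicit Defensive.
Import Order.TTheory GRing.Theory Num.Theory.
Import numFieldNormedType.Exports.
Local Open Scope classical_set_scope.
Local Open Scope ring_scope.

Definition cball {R : realType} {E : normedModType R} (a : E) (r : R) : set E :=
  [set x | `|x - a| <= r].

Definition modulus_of_convexity_set {R : realType} {E : normedModType R}
    (A : set E) (eps : R) : R :=
  sup [set d : R | 0 <= d /\
        forall x1 x2 : E, A x1 -> A x2 -> `|x1 - x2| = eps ->
          cball (2^-1 *: (x1 + x2)) d `<=` A].

Definition modulus_of_convexity {R : realType} (E : normedModType R) (eps : R) : R :=
  modulus_of_convexity_set (cball (0 : E) 1) eps.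

Definition uniformly_convex {R : realType} (E : normedModType R) : Prop :=
  forall eps : R, 0 < eps < 2 -> 0 < modulus_of_convexity E eps.

From HB Require Import structures.
From mathcomp Require Import all_boot all_order all_algebra.
From mathcomp Require Import all_classical all_reals all_analysis.
From mathcomp Require Import ring lra.
Set Implicit Arguments. Unset Strict Implicit.
Import Order.TTheory GRing.Theory Num.Theory.
Import numFieldNormedType.Exports.
Local Open Scope classical_set_scope.
Local Open Scope ring_scope.

(* Take x1, x2 in the unit ball at distance eps whose midpoint m has norm
   almost 1 - delta(eps), let w = m / |m| and t = eta / eps.  The points
   (1 - t) w + t x_i are at distance t eps = eta, and their midpoint has norm
   1 - t + t |m|, which gives delta(eta) <= t delta(eps).  Since |x_i - m| =
   eps / 2 while |w - m| = 1 - |m| is about delta(eps), both x_i are at distance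
   at least r(eps) from w; uniform convexity of the segments [w, x_i] then pushes
   these two points a further 2 (1 - t) delta(r(eps)) inside the ball, and
   this slack is subtracted from the bound. *)

Lemma in_cball01 {R : realType} {E : normedModType R} (x : E) :
  cball 0 1 x <-> `|x| <= 1.
Proof. by rewrite /cball /= subr0. Qed.

Lemma distl_midpoint {R : realType} {E : normedModType R} (x1 x2 : E) :
  `|x1 - 2^-1 *: (x1 + x2)| = `|x1 - x2| / 2.
Proof.
have -> : x1 - 2^-1 *: (x1 + x2) = 2^-1 *: (x1 - x2).
  have {1}-> : x1 = 2^-1 *: x1 + 2^-1 *: x1.
    by rewrite -scalerDl -[LHS]scale1r; congr (_ *: _); field.
  by rewrite scalerDr opprD addrA addrK scalerBr.
by rewrite normrZ ger0_norm ?invr_ge0 // mulrC.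
Qed.

Lemma distr_midpoint {R : realType} {E : normedModType R} (x1 x2 : E) :
  `|x2 - 2^-1 *: (x1 + x2)| = `|x1 - x2| / 2.
Proof. by rewrite [x1 + x2]addrC distl_midpoint distrC. Qed.

Section ModulusOfConvexity.
Variables (R : realType) (E : normedModType R) (u : E).
Hypothesis norm_u : `|u| = 1.

Local Notation delta := (modulus_of_convexity E).
Local Notation B1 := (cball (0 : E) 1).

(* The fallback [u] only serves to make [ndir 0] a unit vector. *)
Definition ndir (m : E) : E := if m == 0 then u else `|m|^-1 *: m.

Lemma norm_ndir m : `|ndir m| = 1.
Proof.
rewrite /ndir; case: eqP => [//|/eqP hm].
by rewrite normrZ ger0_norm ?invr_ge0 // mulVf // normr_eq0.
Qed.

Lemma norm_ndirZD (m : E) a b : 0 <= a -> 0 <= b ->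
  `|a *: ndir m + b *: m| = a + b * `|m|.
Proof.
move=> a0 b0; rewrite /ndir; case: eqP => [->|/eqP hm].
  by rewrite normr0 mulr0 scaler0 addr0 normrZ norm_u mulr1 addr0 ger0_norm.
have nm : 0 < `|m| by rewrite normr_gt0.
rewrite scalerA -scalerDl normrZ ger0_norm.
  by rewrite mulrDl -mulrA mulVf ?mulr1 // lt0r_neq0.
by rewrite addr_ge0 // mulr_ge0 // invr_ge0 ltW.
Qed.

Lemma dist_ndir (m : E) : `|m| <= 1 -> `|m - ndir m| <= 1 - `|m|.
Proof.
move=> m1; rewrite /ndir; case: eqP => [->|/eqP hm].
  by rewrite sub0r normrN norm_u normr0 subr0.
have nm : 0 < `|m| by rewrite normr_gt0.
rewrite -{1}(scale1r m) -scalerBl normrZ ler0_norm; last by rewrite subr_le0 invf_ge1.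
by rewrite opprB mulrBl mulVf ?lt0r_neq0 // mul1r.
Qed.

Definition midpoint_radii (e : R) := [set d : R | 0 <= d /\
  forall x1 x2 : E, B1 x1 -> B1 x2 -> `|x1 - x2| = e ->
    cball (2^-1 *: (x1 + x2)) d `<=` B1].

Lemma midpoint_radii_ub e x1 x2 d : B1 x1 -> B1 x2 -> `|x1 - x2| = e ->
  midpoint_radii e d -> d <= 1 - `|2^-1 *: (x1 + x2)|.
Proof.
move=> h1 h2 he [d0 hd]; set m := 2^-1 *: (x1 + x2).
have /in_cball01 : B1 (m + d *: ndir m).
  apply: (hd _ _ h1 h2 he).
  by rewrite /cball /= addrAC subrr add0r normrZ norm_ndir mulr1 ger0_norm.
by rewrite addrC -{2}[m]scale1r norm_ndirZD // mul1r; lra.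
Qed.

Lemma midpoint_radii0 e x1 x2 : B1 x1 -> B1 x2 -> `|x1 - x2| = e ->
  midpoint_radii e 0.
Proof.
move=> _ _ _; split => // y1 y2 /in_cball01 h1 /in_cball01 h2 _ y.
rewrite /cball /= normr_le0 subr_eq0 => /eqP ->; apply/in_cball01.
rewrite normrZ ger0_norm ?invr_ge0 //; have := ler_normD y1 y2; lra.
Qed.

Lemma has_sup_midpoint_radii e x1 x2 : B1 x1 -> B1 x2 -> `|x1 - x2| = e ->
  has_sup (midpoint_radii e).
Proof.
move=> h1 h2 he; split; first by exists 0; exact: midpoint_radii0 h1 h2 he.
by exists (1 - `|2^-1 *: (x1 + x2)|) => d; exact: midpoint_radii_ub.
Qed.

Lemma modulus_le_midpoint e x1 x2 : B1 x1 -> B1 x2 -> `|x1 - x2| = e ->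
  delta e <= 1 - `|2^-1 *: (x1 + x2)|.
Proof.
move=> h1 h2 he; apply: ge_sup; first by exists 0; exact: midpoint_radii0 h1 h2 he.
by move=> d; exact: midpoint_radii_ub.
Qed.

Lemma antipodal_pair e : 0 <= e <= 2 ->
  [/\ B1 ((e / 2) *: u), B1 (- ((e / 2) *: u))
    & `|(e / 2) *: u - - ((e / 2) *: u)| = e].
Proof.
move=> /andP[e0 e2]; have ue : `|(e / 2) *: u| = e / 2.
  by rewrite normrZ norm_u mulr1 ger0_norm ?divr_ge0.
split; [apply/in_cball01; rewrite ue; lra | apply/in_cball01; rewrite normrN ue; lra |].
by rewrite opprK -scalerDl normrZ norm_u mulr1 ger0_norm; [field | lra].
Qed.

Lemma modulus_ge0 e : 0 <= e <= 2 -> 0 <= delta e.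
Proof.
case/antipodal_pair => h1 h2 he.
exact: (sup_upper_bound (has_sup_midpoint_radii h1 h2 he) (midpoint_radii0 h1 h2 he)).
Qed.

Lemma modulus_le1 e : 0 <= e <= 2 -> delta e <= 1.
Proof.
case/antipodal_pair => h1 h2 he.
by have := modulus_le_midpoint h1 h2 he; rewrite subrr scaler0 normr0 subr0.
Qed.

Lemma modulus0 : delta 0 <= 0.
Proof.
have hB : B1 u by apply/in_cball01; rewrite norm_u.
have := modulus_le_midpoint hB hB (erefl _); rewrite subrr normr0.
have -> : 2^-1 *: (u + u) = u.
  by rewrite -{1 2}(scale1r u) -scalerDl scalerA -[RHS]scale1r; congr (_ *: _); field.
by rewrite norm_u subrr.
Qed.

Lemma modulus_approx e g : 0 <= e <= 2 -> 0 < g -> exists x1 x2,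
  [/\ B1 x1, B1 x2, `|x1 - x2| = e & 1 - `|2^-1 *: (x1 + x2)| < delta e + g].
Proof.
move=> he g0; have [h1 h2 h3] := antipodal_pair he.
apply: contrapT => Hno.
have far y1 y2 : B1 y1 -> B1 y2 -> `|y1 - y2| = e ->
    delta e + g <= 1 - `|2^-1 *: (y1 + y2)|.
  move=> k1 k2 k3; rewrite leNgt; apply/negP => hlt; apply: Hno.
  by exists y1, y2.
have : midpoint_radii e (delta e + g).
  split; first by rewrite addr_ge0 ?(modulus_ge0 he) ?ltW.
  move=> y1 y2 k1 k2 k3 y; rewrite /cball /= => hy; rewrite subr0.
  have := far _ _ k1 k2 k3; have := ler_distD (2^-1 *: (y1 + y2)) y 0.
  by rewrite !subr0; lra.
move/(sup_upper_bound (has_sup_midpoint_radii h1 h2 h3)).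
rewrite -/(modulus_of_convexity_set B1 e) -/(delta e); lra.
Qed.

Lemma modulus_le_toward_ndir e t s x1 x2 : 0 < t <= 1 -> 0 <= s -> B1 x1 -> B1 x2 ->
  `|x1 - x2| = e ->
  let m := 2^-1 *: (x1 + x2) in
  `|(1 - t) *: ndir m + t *: x1| <= 1 - s ->
  `|(1 - t) *: ndir m + t *: x2| <= 1 - s ->
  delta (t * e) <= t * (1 - `|m|) - s.
Proof.
move=> /andP[t0 t1] s0 h1 h2 he m k1 k2; set c := 1 - t + s.
have c0 : 0 <= c by rewrite /c; lra.
have push x : `|(1 - t) *: ndir m + t *: x| <= 1 - s -> B1 (c *: ndir m + t *: x).
  move=> k; apply/in_cball01.
  have -> : c *: ndir m + t *: x = ((1 - t) *: ndir m + t *: x) + s *: ndir m.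
    by rewrite addrAC -scalerDl.
  have := ler_normD ((1 - t) *: ndir m + t *: x) (s *: ndir m).
  rewrite normrZ norm_ndir mulr1 ger0_norm //; lra.
have := modulus_le_midpoint (push _ k1) (push _ k2) (erefl _).
rewrite opprD addrACA subrr add0r -scalerBr normrZ (ger0_norm (ltW t0)) he.
have -> : 2^-1 *: (c *: ndir m + t *: x1 + (c *: ndir m + t *: x2))
    = c *: ndir m + t *: m.
  rewrite addrACA -scalerDl -(scalerDr t) (scalerDr 2^-1) !scalerA /m.
  by congr (_ *: _ + _ *: _); [field | exact: mulrC].
rewrite (norm_ndirZD _ c0 (ltW t0)) /c; lra.
Qed.

Lemma modulus_le_near_optimal e t s g :
  0 < t <= 1 -> 0 <= e <= 2 -> 0 <= s -> 0 < g ->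
  (forall x1 x2 : E, B1 x1 -> B1 x2 -> `|x1 - x2| = e ->
     1 - `|2^-1 *: (x1 + x2)| < delta e + g / t ->
     let w := ndir (2^-1 *: (x1 + x2)) in
     `|(1 - t) *: w + t *: x1| <= 1 - s /\ `|(1 - t) *: w + t *: x2| <= 1 - s) ->
  delta (t * e) <= t * delta e - s + g.
Proof.
move=> tP he s0 g0 near; have /andP[t0 _] := tP.
have [x1 [x2 [h1 h2 h12 hm]]] := modulus_approx he (divr_gt0 g0 t0).
have [k1 k2] := near _ _ h1 h2 h12 hm.
have := modulus_le_toward_ndir tP s0 h1 h2 h12 k1 k2.
have : t * (1 - `|2^-1 *: (x1 + x2)|) <= t * (delta e + g / t).
  by rewrite ler_wpM2l ?ltW.
rewrite [t * (_ + g / t)]mulrDr (mulrC t (g / t)) mulfVK ?lt0r_neq0 //; lra.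
Qed.

Lemma modulus_homo_le eta eps : 0 < eta <= eps -> eps <= 2 ->
  delta eta <= eta / eps * delta eps.
Proof.
move=> /andP[eta0 le_eta] eps2; have eps0 : 0 < eps by lra.
set t := eta / eps; have te : t * eps = eta by rewrite mulfVK ?lt0r_neq0.
have tP : 0 < t <= 1 by rewrite divr_gt0 //= ler_pdivrMr // mul1r.
clearbody t; have /andP[t0 t1] := tP; rewrite -te; apply/ler_addgt0Pr => g g0.
rewrite -[t * delta eps]subr0; apply: (modulus_le_near_optimal tP _ (lexx 0) g0).
  by apply/andP; split; lra.
move=> x1 x2 /in_cball01 h1 /in_cball01 h2 _ _ w.
suff k x : `|x| <= 1 -> `|(1 - t) *: w + t *: x| <= 1 - 0 by split; apply: k.
move=> hx; have := ler_normD ((1 - t) *: w) (t *: x).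
rewrite !normrZ /w norm_ndir !ger0_norm; [|lra..].
have : t * `|x| <= t by rewrite ler_piMr // ltW.
lra.
Qed.

Lemma modulus_le_half e : 0 <= e <= 2 -> delta e <= e / 2.
Proof.
move=> /andP[e0 e2]; have [->|en0] := eqVneq e 0; first by rewrite mul0r modulus0.
have eP : 0 < e <= 2 by rewrite lt_neqAle eq_sym en0 e0.
have := modulus_homo_le eP (lexx 2).
have := modulus_le1 (ltac:(apply/andP; lra) : 0 <= 2 <= 2).
have : 0 <= e / 2 by rewrite divr_ge0.
move: (delta 2) => d2; nra.
Qed.

Lemma modulus_le r d : 0 <= r -> r <= d -> d <= 2 -> delta r <= delta d.
Proof.
move=> r0 rd d2; have d0 : 0 <= d by apply: le_trans rd.
have hd0 := modulus_ge0 (ltac:(apply/andP; split; [exact: d0 | exact: d2]) : 0 <= d <= 2).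
have [->|rn0] := eqVneq r 0; first exact: le_trans modulus0 hd0.
have rP : 0 < r <= d by rewrite lt_neqAle eq_sym rn0 r0.
apply: le_trans (modulus_homo_le rP d2) _; apply: ler_piMl => //.
by rewrite ler_pdivrMr ?mul1r //; apply: lt_le_trans rd; case/andP: rP.
Qed.

(* Write (1 - t) w + t x as 2 (1 - t) times the midpoint of [w, x] plus
   (2 t - 1) x. *)
Lemma norm_convex_comb_le w x t : B1 w -> B1 x -> 2^-1 <= t <= 1 ->
  `|(1 - t) *: w + t *: x| <= 1 - 2 * (1 - t) * delta `|w - x|.
Proof.
move=> hw hx /andP[t1 t2].
have -> : (1 - t) *: w + t *: x
    = (2 * (1 - t)) *: (2^-1 *: (w + x)) + (2 * t - 1) *: x.
  rewrite scalerA scalerDr -addrA -scalerDl.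
  have -> : 2 * (1 - t) * 2^-1 = 1 - t by field.
  by have -> : 1 - t + (2 * t - 1) = t by ring.
have hm := modulus_le_midpoint hw hx (erefl _).
have := ler_normD ((2 * (1 - t)) *: (2^-1 *: (w + x))) ((2 * t - 1) *: x).
rewrite normrZ [`|(2 * t - 1) *: x|]normrZ !ger0_norm; [|lra|lra].
have : 2 * (1 - t) * `|2^-1 *: (w + x)| <= 2 * (1 - t) * (1 - delta `|w - x|).
  by apply: ler_wpM2l => //; lra.
have : (2 * t - 1) * `|x| <= 2 * t - 1 by apply: ler_piMr; [lra | exact/in_cball01].
lra.
Qed.

Lemma norm_toward_ndir_le m x t r : `|m| <= 1 -> B1 x -> 2^-1 <= t <= 1 ->
  0 <= r -> r <= `|x - m| - (1 - `|m|) ->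
  `|(1 - t) *: ndir m + t *: x| <= 1 - 2 * (1 - t) * delta r.
Proof.
move=> m1 hx tP r0 r_le; have /andP[_ t1] := tP.
have hw : B1 (ndir m) by apply/in_cball01; rewrite norm_ndir.
have := norm_convex_comb_le hw hx tP.
have : delta r <= delta `|ndir m - x|.
  apply: modulus_le => //.
    have := dist_ndir m1; have := ler_distD (ndir m) x m.
    by rewrite (distrC x (ndir m)) (distrC (ndir m) m); lra.
  by have := ler_normB (ndir m) x; move: hw hx => /in_cball01 ? /in_cball01 ?; lra.
have : 0 <= 1 - t by lra.
move: (delta r) (delta `|ndir m - x|) => a b; nra.
Qed.

Lemma modulus_improved_le eps t : 0 <= eps <= 2 -> 2^-1 <= t <= 1 ->
  0 < (eps / 2 - delta eps) / 4 ->
  delta (t * eps) <= t * delta eps - 2 * (1 - t) * delta ((eps / 2 - delta eps) / 4).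
Proof.
move=> epsP tP; set r := (eps / 2 - delta eps) / 4 => r0.
have /andP[t1 t2] := tP; have /andP[eps0 eps2] := epsP.
have hr : 4 * r = eps / 2 - delta eps by rewrite /r; field.
have dr0 : 0 <= delta r.
  by apply: modulus_ge0; rewrite (ltW r0) /=; have := modulus_ge0 epsP; rewrite /r; lra.
(* [gam <= 3 r t] keeps both x_i at distance at least [r] from [ndir m]. *)
apply/ler_addgt0Pr => g g0; set gam := Num.min g (3 * r * t).
have gam0 : 0 < gam by rewrite lt_min g0 /=; apply: mulr_gt0; lra.
have gam_t : gam / t <= 3 * r by rewrite ler_pdivrMr; [rewrite ge_min lexx orbT | lra].
suff : delta (t * eps) <= t * delta eps - 2 * (1 - t) * delta r + gam.
  have : gam <= g by rewrite ge_min lexx.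
  lra.
apply: modulus_le_near_optimal => //.
- by apply/andP; split; lra.
- by apply: mulr_ge0 => //; lra.
move=> x1 x2 h1 h2 h12 hm w; set m := 2^-1 *: (x1 + x2) in hm w *.
have m1 : `|m| <= 1.
  move: h1 h2 => /in_cball01 h1 /in_cball01 h2; have := ler_normD x1 x2.
  by rewrite /m normrZ ger0_norm ?invr_ge0 //; lra.
by split; apply: norm_toward_ndir_le;
  rewrite // ?(ltW r0) // ?distl_midpoint ?distr_midpoint h12; lra.
Qed.

End ModulusOfConvexity.

Lemma uniformly_convex_unit {R : realType} (E : normedModType R) :
  uniformly_convex E -> exists u : E, `|u| = 1.
Proof.
move=> hE; have [x0 x0n] : exists x : E, x != 0.
  apply: contrapT => Hno.
  have E0 (x : E) : x = 0 by apply: contrapT => hx; apply: Hno; exists x; apply/eqP.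
  have := hE 1 (ltac:(apply/andP; split; lra) : (0 : R) < 1 < 2).
  rewrite /modulus_of_convexity /modulus_of_convexity_set sup_out ?ltxx //.
  move=> [_ [M hM]]; have : `|M| + 1 <= M.
    apply: hM; split; first by rewrite addr_ge0.
    by move=> y1 y2 _ _ _ y _; rewrite /cball /= (E0 y) subrr normr0.
  by have := ler_norm M; lra.
exists (`|x0|^-1 *: x0).
by rewrite normrZ ger0_norm ?invr_ge0 // mulVf // normr_eq0.
Qed.

Unset Implicit Arguments.

Theorem lemma1p2 (R : realType) (E : completeNormedModType R)
  (hE : uniformly_convex E) (eps eta : R) :
  0 < eps / 2 -> eps / 2 < eta -> eta < eps -> eps < 2 ->
  modulus_of_convexity E eta / eta <=
    modulus_of_convexity E eps / eps
    - 2 * ((eps - eta) / (eps * eta))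
        * modulus_of_convexity E ((eps / 2 - modulus_of_convexity E eps) / 4).
Proof.
move=> eps0 eta_gt eta_lt eps2; have [u norm_u] := uniformly_convex_unit hE.
set delta := modulus_of_convexity E; set r := (eps / 2 - delta eps) / 4.
have epsP : 0 <= eps <= 2 by apply/andP; split; lra.
set t := eta / eps; have te : t * eps = eta by rewrite mulfVK //; apply: lt0r_neq0; lra.
have tP : 2^-1 <= t <= 1.
  by apply/andP; split; [rewrite ler_pdivlMr | rewrite ler_pdivrMr]; lra.
have -> : delta eps / eps - 2 * ((eps - eta) / (eps * eta)) * delta r
    = (t * delta eps - 2 * (1 - t) * delta r) / eta.
  by rewrite /t; field; apply/andP; split; apply: lt0r_neq0; lra.
apply: ler_wpM2r; first by rewrite invr_ge0; lra.
have [r0|r_le0] := ltP 0 r.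
  by rewrite -te; have /(_ r0) := modulus_improved_le norm_u epsP tP.
have r_eq0 : r = 0.
  apply/eqP; rewrite eq_le r_le0 /r.
  by have := modulus_le_half norm_u epsP; rewrite -/delta; lra.
have := modulus_homo_le norm_u (ltac:(apply/andP; split; lra) : 0 < eta <= eps) (ltW eps2).
have := modulus0 norm_u; rewrite -/delta -/t r_eq0.
have : 0 <= 1 - t by case/andP: tP => _; lra.
move: (delta 0) => d0; nra.
Qed.
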